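(* Let $f:\mathbb{R}\to\mathbb{R}$, $f(x):=\exp(x^3-2x^2)-1$. Then $f$ has two distinct fixed points $p_1,p_2$ such that for each $i\in\{1,2\}$ there exist constants $\epsilon_i>0$, $c_i>0$ and $K_i\in[0,1)$ with the following property: for every initial point $x^{(0)}\in[p_i-\epsilon_i,p_i+\epsilon_i]$, the fixed-point iteration $x^{(t)}=f(x^{(t-1)})$ ($t\ge1$) converges to $p_i$, and for every $t\ge 2$, $$|x^{(t)}-p_i|\le K_i^t\cdot c_i\epsilon_i .$$
   Context: A fixed point of $f$ is a point $p$ with $f(p)=p$. *)

From Stdlib Require Import Reals.
Open Scope R_scope.

Definition fC1 (x : R) : R := exp (x ^ 3 - 2 * x ^ 2) - 1.

Fixpoint iterate (g : R -> R) (t : nat) (x0 : R) : R :=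
  match t with
  | O => x0
  | S t' => g (iterate g t' x0)
  end.

Definition is_fixed_point (g : R -> R) (p : R) : Prop := g p = p.

(* Both fixed points are found explicitly: 0 is one, and the intermediate value
   theorem applied to x - f(x) on [-1, -7/8] gives another.  Since
   f'(x) = exp(x^3 - 2x^2) (3x^2 - 4x), the derivative is at most 1/2 in
   absolute value on [-1/10, 1/10], where exp(x^3 - 2x^2) <= 1, and at most
   7/8 on [-1, -7/8], where exp(x^3 - 2x^2) <= exp(-11/5) < 1/8.  By the mean
   value theorem f is a contraction towards the fixed point on a ball around
   it, so the iterates converge geometrically. *)

From Stdlib Require Import Reals Lra.
From Coquelicot Require Import Coquelicot.
Open Scope R_scope.

Definition geometrically_attracting (g : R -> R) (p : R) : Prop :=
  exists eps c K : R,
    0 < eps /\ 0 < c /\ 0 <= K < 1 /\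
    forall x0 : R, p - eps <= x0 <= p + eps ->
      Un_cv (fun t => iterate g t x0) p /\
      forall t : nat, (2 <= t)%nat ->
        Rabs (iterate g t x0 - p) <= K ^ t * c * eps.

Lemma Un_cv_geometric_bound (u : nat -> R) (l K C : R) :
  0 <= K < 1 -> (forall t, Rabs (u t - l) <= K ^ t * C) -> Un_cv u l.
Proof.
  intros HK Hu e He.
  assert (HC : 0 <= C) by (specialize (Hu O); simpl in Hu; pose proof (Rabs_pos (u O - l)); lra).
  destruct (pow_lt_1_zero K ltac:(rewrite Rabs_right; lra) (e / (C + 1)))
    as [N HN]; [apply Rdiv_lt_0_compat; lra|].
  exists N. intros t Ht. unfold Rdist.
  specialize (HN t Ht). rewrite Rabs_right in HN by (apply Rle_ge, pow_le; lra).
  apply Rmult_lt_compat_r with (r := C + 1) in HN; [|lra].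
  unfold Rdiv in HN. rewrite Rmult_assoc, Rinv_l, Rmult_1_r in HN by lra.
  pose proof (pow_le K t (proj1 HK)). specialize (Hu t). nra.
Qed.

Section Contraction.

Variables (g : R -> R) (p e K : R).
Hypotheses (e_pos : 0 < e) (K_range : 0 <= K < 1).
Hypothesis contract :
  forall x, p - e <= x <= p + e -> Rabs (g x - p) <= K * Rabs (x - p).

Lemma iterate_contraction x0 t :
  p - e <= x0 <= p + e -> Rabs (iterate g t x0 - p) <= K ^ t * Rabs (x0 - p).
Proof.
  intros Hx0. induction t as [|t IH]; simpl; [lra|].
  assert (HKt : 0 <= K ^ t <= 1)
    by (split; [apply pow_le | rewrite <- (pow1 t); apply pow_incr]; lra).
  assert (Hball : Rabs (iterate g t x0 - p) <= e).
  { apply Rle_trans with (1 := IH).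
    pose proof (Rabs_pos (x0 - p)). assert (Rabs (x0 - p) <= e) by (apply Rabs_le; lra).
    nra. }
  apply Rabs_le_between' in Hball.
  apply Rle_trans with (1 := contract _ Hball).
  rewrite Rmult_assoc. apply Rmult_le_compat_l; lra.
Qed.

Lemma contraction_geometrically_attracting : geometrically_attracting g p.
Proof.
  exists e, 1, K. do 3 (split; [lra|]).
  intros x0 Hx0.
  assert (Hbound : forall t, Rabs (iterate g t x0 - p) <= K ^ t * e).
  { intros t. apply Rle_trans with (1 := iterate_contraction x0 t Hx0).
    apply Rmult_le_compat_l; [apply pow_le; lra | apply Rabs_le; lra]. }
  split.
  - exact (Un_cv_geometric_bound _ _ K e K_range Hbound).
  - intros t _. rewrite Rmult_1_r. apply Hbound.
Qed.

End Contraction.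

Lemma derivative_bound_contraction (g g' : R -> R) (p e K : R) :
  g p = p ->
  (forall c, p - e <= c <= p + e -> derivable_pt_lim g c (g' c)) ->
  (forall c, p - e <= c <= p + e -> Rabs (g' c) <= K) ->
  forall x, p - e <= x <= p + e -> Rabs (g x - p) <= K * Rabs (x - p).
Proof.
  intros Hp Hder Hbound x Hx.
  assert (Hseg : forall c, Rmin p x <= c <= Rmax p x -> p - e <= c <= p + e).
  { intros c. unfold Rmin, Rmax. destruct (Rle_dec p x); lra. }
  destruct (MVT_abs g g' p x) as [c [Hmvt Hc]]; [auto|].
  rewrite Hp in Hmvt. rewrite Hmvt.
  apply Rmult_le_compat_r; [apply Rabs_pos | auto].
Qed.

Lemma exp_le_compat x y : x <= y -> exp x <= exp y.
Proof.
  intros [Hlt | ->]; [left; apply exp_increasing | right]; easy.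
Qed.

Definition dfC1 (x : R) : R := exp (x ^ 3 - 2 * x ^ 2) * (3 * x ^ 2 - 4 * x).

Lemma fC1_derivative x : derivable_pt_lim fC1 x (dfC1 x).
Proof.
  unfold fC1, dfC1. apply is_derive_Reals. auto_derive; [easy|].
  replace (x * (x * (x * 1)) + - (2 * (x * (x * 1)))) with (x ^ 3 - 2 * x ^ 2) by ring.
  ring.
Qed.

Lemma Rabs_dfC1 x :
  Rabs (dfC1 x) = exp (x ^ 3 - 2 * x ^ 2) * Rabs (3 * x ^ 2 - 4 * x).
Proof.
  unfold dfC1. rewrite Rabs_mult, Rabs_right; [easy|].
  apply Rle_ge, Rlt_le, exp_pos.
Qed.

Lemma fC1_fixed_point_0 : is_fixed_point fC1 0.
Proof.
  unfold is_fixed_point, fC1.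
  replace (0 ^ 3 - 2 * 0 ^ 2) with 0 by ring. rewrite exp_0. ring.
Qed.

Lemma fC1_attracting_0 : geometrically_attracting fC1 0.
Proof.
  apply (contraction_geometrically_attracting _ 0 (1/10) (1/2)); [lra|lra|].
  apply (derivative_bound_contraction _ dfC1); [exact fC1_fixed_point_0|auto using fC1_derivative|].
  intros c Hc. rewrite Rabs_dfC1.
  assert (Hexp : exp (c ^ 3 - 2 * c ^ 2) <= 1)
    by (rewrite <- exp_0; apply exp_le_compat; nra).
  assert (Rabs (3 * c ^ 2 - 4 * c) <= 9/20) by (apply Rabs_le; nra).
  pose proof (exp_pos (c ^ 3 - 2 * c ^ 2)). pose proof (Rabs_pos (3 * c ^ 2 - 4 * c)).
  nra.
Qed.

Lemma exp_neg_11_5_lt : exp (- (11/5)) < 1/8.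
Proof.
  pose proof (exp_ge_taylor (11/5) 4 ltac:(lra)) as Htaylor. simpl in Htaylor.
  rewrite exp_Ropp. pose proof (exp_pos (11/5)).
  apply Rmult_lt_reg_l with (exp (11/5)); [lra|].
  rewrite Rinv_r; lra.
Qed.

Lemma cubic_le_neg_11_5 x : x <= -7/8 -> x ^ 3 - 2 * x ^ 2 <= - (11/5).
Proof.
  intros Hx.
  (* x^3 - 2x^2 is increasing on the negative half-line and is below -11/5 at -7/8 *)
  assert (Hfactor : x ^ 3 - 2 * x ^ 2 - ((-7/8) ^ 3 - 2 * (-7/8) ^ 2)
                    = (x + 7/8) * (x ^ 2 - (7/8) * x + 49/64 - 2 * x + 7/4)) by field.
  assert (0 <= x ^ 2 - (7/8) * x + 49/64 - 2 * x + 7/4) by nra.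
  nra.
Qed.

Lemma exp_cubic_lt_1_8 x : x <= -7/8 -> exp (x ^ 3 - 2 * x ^ 2) < 1/8.
Proof.
  intros Hx. apply Rle_lt_trans with (2 := exp_neg_11_5_lt).
  exact (exp_le_compat _ _ (cubic_le_neg_11_5 x Hx)).
Qed.

Lemma fC1_continuity : continuity fC1.
Proof.
  intros x. exact (derivable_continuous_pt fC1 x (exist _ _ (fC1_derivative x))).
Qed.

Lemma fC1_negative_fixed_point :
  exists p, -1 < p < -7/8 /\ is_fixed_point fC1 p.
Proof.
  set (h := fun x => x - fC1 x).
  assert (Hcont : continuity h)
    by (apply continuity_minus; [apply derivable_continuous, derivable_id | apply fC1_continuity]).
  assert (Hneg : h (-1) < 0) by (unfold h, fC1; pose proof (exp_pos ((-1) ^ 3 - 2 * (-1) ^ 2)); lra).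
  assert (Hpos : 0 < h (-7/8)) by (unfold h, fC1; pose proof (exp_cubic_lt_1_8 (-7/8)); lra).
  destruct (IVT h (-1) (-7/8) Hcont ltac:(lra) Hneg Hpos) as [p [Hp Hhp]].
  exists p. split.
  - split; apply Rnot_le_lt; intros Hle.
    + replace p with (-1) in Hhp by lra. lra.
    + replace p with (-7/8) in Hhp by lra. lra.
  - unfold is_fixed_point. unfold h in Hhp. lra.
Qed.

Lemma fC1_negative_fixed_point_attracting p :
  -1 < p < -7/8 -> is_fixed_point fC1 p -> geometrically_attracting fC1 p.
Proof.
  intros Hp Hfix. set (e := Rmin (p + 1) (-7/8 - p)).
  assert (He : 0 < e) by (apply Rmin_glb_lt; lra).
  pose proof (Rmin_l (p + 1) (-7/8 - p)). pose proof (Rmin_r (p + 1) (-7/8 - p)).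
  apply (contraction_geometrically_attracting _ p e (7/8)); [exact He|lra|].
  apply (derivative_bound_contraction _ dfC1); [exact Hfix|auto using fC1_derivative|].
  intros c Hc. rewrite Rabs_dfC1.
  assert (Hc' : -1 <= c <= -7/8) by (unfold e in Hc; lra).
  pose proof (exp_cubic_lt_1_8 c (proj2 Hc')).
  assert (Rabs (3 * c ^ 2 - 4 * c) <= 7) by (apply Rabs_le; nra).
  pose proof (exp_pos (c ^ 3 - 2 * c ^ 2)). pose proof (Rabs_pos (3 * c ^ 2 - 4 * c)).
  nra.
Qed.

Theorem lemmaC1 :
  exists p1 p2 : R,
    p1 <> p2 /\ is_fixed_point fC1 p1 /\ is_fixed_point fC1 p2 /\
    forall p : R, (p = p1 \/ p = p2) ->
      exists eps c K : R,
        0 < eps /\ 0 < c /\ 0 <= K < 1 /\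
        forall x0 : R, p - eps <= x0 <= p + eps ->
          Un_cv (fun t => iterate fC1 t x0) p /\
          forall t : nat, (2 <= t)%nat ->
            Rabs (iterate fC1 t x0 - p) <= K ^ t * c * eps.
Proof.
  destruct fC1_negative_fixed_point as [p2 [Hp2 Hfix2]].
  exists 0, p2. split; [lra|]. split; [exact fC1_fixed_point_0|]. split; [exact Hfix2|].
  intros p [-> | ->].
  - exact fC1_attracting_0.
  - exact (fC1_negative_fixed_point_attracting p2 Hp2 Hfix2).
Qed.
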